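(* Let $P=P_1\cdots P_p$ and $T=T_1\cdots T_t$ be strings over a finite alphabet $\Sigma$, and let $R^j(m_{r,i})$ be the bits computed by the GSM recurrence described in the context. Let $(r,i)$ be any pair with $r\in\{-1,0,1\}$, $i\in\{1,\dots,p\}$ and $(r,i)\notin\{(-1,1),(1,p)\}$, and let $j\in\{i,\dots,t\}$. If there exists a swap permutation $\pi$ for $P$ such that $(\pi(P))_{[1,i]}=T_{[j-i+1,j]}$ and $\pi(i)=i+r$, then $R^j(m_{r,i})=1$.
   Context: Strings: for a string $S$, $S_i$ is its $i$-th symbol and $S_{[i,j]}=S_iS_{i+1}\cdots S_j$. A swap permutation for a string $S$ of length $n$ is a permutation $\pi$ of $\{1,\dots,n\}$ such that (i) if $\pi(i)=j$ then $\pi(j)=i$; (ii) $\pi(i)\in\{i-1,i,i+1\}$ for all $i$; (iii) if $\pi(i)\neq i$ then $S_{\pi(i)}\neq S_i$. The swapped version is $\pi(S)=S_{\pi(1)}S_{\pi(2)}\cdots S_{\pi(n)}$. Bit vectors: all vectors below are elements of $\{0,1\}^p$ with entries indexed $1,\dots,p$; $\mid$ and $\&$ are bitwise OR and AND. $\mathit{LShift}(x)_1=0$ and $\mathit{LShift}(x)_i=x_{i-1}$ for $2\le i\le p$; $\mathit{RShift}(x)_i=x_{i+1}$ for $1\le i\le p-1$ and $\mathit{RShift}(x)_p=0$; $\mathit{LSO}(x)=\mathit{LShift}(x)\mid e_1$, where $e_1$ has a $1$ in entry $1$ and $0$ elsewhere. Masks: for $x\in\Sigma$, $D^x_i=1$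 iff $P_i=x$. GSM recurrence: $R_U^0=R_M^0=R_D^0=0^p$, and for $j=1,\dots,t$: $R_U'^{\,j}=\mathit{LSO}(R_D^{j-1})$, $R_M'^{\,j}=R_D'^{\,j}=\mathit{LSO}(R_M^{j-1}\mid R_U^{j-1})$, $R_U^{j}=R_U'^{\,j}\ \&\ \mathit{LShift}(D^{T_j})$, $R_M^{j}=R_M'^{\,j}\ \&\ D^{T_j}$, $R_D^{j}=R_D'^{\,j}\ \&\ \mathit{RShift}(D^{T_j})$. Notation: $R^j(m_{-1,i})=(R_U^j)_i$, $R^j(m_{0,i})=(R_M^j)_i$, $R^j(m_{1,i})=(R_D^j)_i$. *)

(* Strings and bit vectors are 1-indexed functions on nat. *)
From mathcomp Require Import all_boot all_order all_algebra.
Set Implicit Arguments. Unset Strict Implicit. Unset Printing Implicit Defensive.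

Definition swap_perm (Sigma : eqType) (n : nat) (S : nat -> Sigma) (pi : nat -> nat) : Prop :=
  (forall i, 1 <= i <= n -> 1 <= pi i <= n) /\
  (forall i j, 1 <= i <= n -> 1 <= j <= n -> pi i = pi j -> i = j) /\
  (forall i j, 1 <= i <= n -> 1 <= j <= n -> pi i = j -> pi j = i) /\
  (forall i, 1 <= i <= n -> pi i = i.-1 \/ pi i = i \/ pi i = i.+1) /\
  (forall i, 1 <= i <= n -> pi i <> i -> S (pi i) <> S i).

Definition bv := nat -> bool.
Definition bvor (x y : bv) : bv := fun i => x i || y i.
Definition bvand (x y : bv) : bv := fun i => x i && y i.
Definition LShift (p : nat) (x : bv) : bv := fun i => (2 <= i <= p) && x i.-1.
Definition RShift (p : nat) (x : bv) : bv := fun i => (1 <= i < p) && x i.+1.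
Definition e1 : bv := fun i => i == 1.
Definition LSO (p : nat) (x : bv) : bv := bvor (LShift p x) e1.
Definition zerov : bv := fun _ => false.

Definition Dmask (Sigma : eqType) (p : nat) (P : nat -> Sigma) (x : Sigma) : bv :=
  fun i => (1 <= i <= p) && (P i == x).

Fixpoint GSM (Sigma : eqType) (p : nat) (P T : nat -> Sigma) (j : nat) : bv * bv * bv :=
  match j with
  | 0 => (zerov, zerov, zerov)
  | j'.+1 =>
    let '(RU, RM, RD) := GSM p P T j' in
    let D := Dmask p P (T j) in
    let RU' := LSO p RD in
    let RM' := LSO p (bvor RM RU) in
    (bvand RU' (LShift p D), bvand RM' D, bvand RM' (RShift p D))
  end.

Definition Rbit (Sigma : eqType) (p : nat) (P T : nat -> Sigma) (j : nat) (r : int) (i : nat) : bool :=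
  let '(RU, RM, RD) := GSM p P T j in
  if r == (-1)%R then RU i else if r == 0%R then RM i else RD i.

From mathcomp Require Import all_boot all_order all_algebra.
From mathcomp Require Import zify.

Set Implicit Arguments.
Unset Strict Implicit.
Unset Printing Implicit Defensive.

(* If the swapped prefix of length i + 1
   ends at position j + 1 of T, then its prefix of length i ends at j, and
   pi (i + 1) decides which of the three registers must fire: when
   pi (i + 1) <> i, position i was not swapped forward, so R_M or R_U held at
   (j, i) and LSO carries it to i + 1; when pi (i + 1) = i, position i was
   swapped forward, so R_D held at (j, i).  The mask applied in the step then
   checks exactly the letter P (pi (i + 1)) = T (j + 1). *)

Lemma LSO_succ (p : nat) (x : bv) (i : nat) :
  LSO p x i.+1 = (i == 0) || (i < p) && x i.
Proof. by rewrite /LSO /bvor /LShift /e1 /= orbC; case: i. Qed.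

Section GSMInvariant.

Variables (Sigma : eqType) (p : nat) (P T : nat -> Sigma).

Definition RU (j : nat) : bv := (GSM p P T j).1.1.
Definition RM (j : nat) : bv := (GSM p P T j).1.2.
Definition RD (j : nat) : bv := (GSM p P T j).2.

Lemma RbitE (j : nat) (r : int) (i : nat) :
  Rbit p P T j r i =
  if r == (-1)%R then RU j i else if r == 0%R then RM j i else RD j i.
Proof. by rewrite /Rbit /RU /RM /RD; case: (GSM p P T j) => [[]]. Qed.

Lemma RU_succ (j i : nat) :
  RU j.+1 i = LSO p (RD j) i && LShift p (Dmask p P (T j.+1)) i.
Proof. by rewrite /RU /RD /=; case: (GSM p P T j) => [[]]. Qed.

Lemma RM_succ (j i : nat) :
  RM j.+1 i = LSO p (bvor (RM j) (RU j)) i && Dmask p P (T j.+1) i.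
Proof. by rewrite /RU /RM /=; case: (GSM p P T j) => [[]]. Qed.

Lemma RD_succ (j i : nat) :
  RD j.+1 i = LSO p (bvor (RM j) (RU j)) i && RShift p (Dmask p P (T j.+1)) i.
Proof. by rewrite /RU /RM /RD /=; case: (GSM p P T j) => [[]]. Qed.

Variable pi : nat -> nat.
Hypothesis pi_swap : swap_perm p P pi.

Definition prefix_match (i j : nat) : Prop :=
  forall k, 1 <= k <= i -> P (pi k) = T (j - i + k).

Lemma prefix_match_pred (i j : nat) :
  prefix_match i.+1 j.+1 -> prefix_match i j.
Proof. by move=> Hmatch k Hk; rewrite Hmatch ?subSS //; lia. Qed.

Lemma prefix_match_last (i j : nat) :
  prefix_match i j -> 0 < i <= j -> P (pi i) = T j.
Proof. by move=> Hmatch Hij; rewrite Hmatch; [congr T; lia | lia]. Qed.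

Lemma swap_perm_not_forward (i : nat) :
  1 <= i -> i < p -> pi i.+1 <> i -> pi i = i \/ pi i = i.-1.
Proof.
have [_ [_ [pi_inv [pi_adj _]]]] := pi_swap.
move=> i_gt0 i_ltp Hback.
have Hi : 1 <= i <= p by lia.
case: (pi_adj i Hi) => [|[]]; [by right | by left |].
by move=> /(pi_inv _ _ Hi) E; case: Hback; apply: E; lia.
Qed.

Lemma prefix_match_registers (i j : nat) :
  1 <= i <= p -> i <= j -> prefix_match i j ->
  [/\ pi i = i -> RM j i, pi i = i.-1 -> RU j i & pi i = i.+1 -> RD j i].
Proof.
have [pi_range [_ [pi_inv _]]] := pi_swap.
elim: i j => [|i IH] [|j] // Hi Hij Hmatch.
have Hrange := pi_range i.+1 Hi.
have Hletter : P (pi i.+1) = T j.+1 by apply: (prefix_match_last Hmatch); lia.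
have {}IH : 1 <= i -> [/\ pi i = i -> RM j i, pi i = i.-1 -> RU j i
                        & pi i = i.+1 -> RD j i].
  by move=> i_gt0; apply: IH (prefix_match_pred Hmatch); lia.
have carry : pi i.+1 <> i -> LSO p (bvor (RM j) (RU j)) i.+1.
  move=> Hback; rewrite LSO_succ; have [->|i_gt0] := posnP i; first by [].
  have [HM HU _] := IH i_gt0.
  have i_ltp : i < p by lia.
  rewrite /bvor i_ltp.
  by case: (swap_perm_not_forward i_gt0 i_ltp Hback) => [/HM|/HU] ->; rewrite !orbT.
split=> E.
- rewrite RM_succ carry; last by lia.
  by rewrite /Dmask -Hletter E eqxx andbT.
- have i_gt0 : 1 <= i by lia.
  have [_ _ HD] := IH i_gt0.
  rewrite RU_succ LSO_succ HD; last by apply: (pi_inv _ _ Hi); lia.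
  rewrite /LShift /Dmask /= -Hletter E eqxx; apply/andP; split; last lia.
  by apply/orP; right; lia.
- rewrite RD_succ carry; last by lia.
  by rewrite /RShift /Dmask -Hletter E eqxx; apply/andP; split; lia.
Qed.

End GSMInvariant.

(* The excluded cases (r, i) = (-1, 1) and (1, p) are unused: pi i = i + r
   lies in {1, ..., p}, which already rules them out. *)
Theorem mainTheorem1 (Sigma : finType) (p t : nat) (P T : nat -> Sigma)
    (r : int) (i j : nat) :
  (r == (-1)%R) || (r == 0%R) || (r == 1%R) ->
  1 <= i <= p ->
  ~ ((r = (-1)%R /\ i = 1) \/ (r = 1%R /\ i = p)) ->
  i <= j <= t ->
  (exists pi : nat -> nat,
      swap_perm p P pi /\
      (forall k, 1 <= k <= i -> P (pi k) = T (j - i + k)) /\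
      (Posz (pi i) = (Posz i + r)%R)) ->
  Rbit p P T j r i = true.
Proof.
move=> Hr Hi _ Hij [pi [pi_swap [Hmatch Hpi]]].
have i_lej : i <= j by lia.
have [HM HU HD] := prefix_match_registers pi_swap Hi i_lej Hmatch.
rewrite RbitE.
by case/orP: Hr => [/orP[]|] /eqP Er; subst r => /=; [apply: HU | apply: HM | apply: HD]; lia.
Qed.
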